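(* Let $p$ be a prime and $Q\in\mathbb{Q}_p[X_1,\dots,X_n]$ any quadratic form. Then the following are equivalent: (i) $R(Q(\mathbb{N}^n))$ is dense in $\mathbb{Q}_p$; (ii) $R(Q(\mathbb{Z}^n))$ is dense in $\mathbb{Q}_p$; (iii) $R(Q(\mathbb{Z}_p^n))$ is dense in $\mathbb{Q}_p$.
   Context: $\mathbb{N}$ denotes the nonnegative integers, $\mathbb{Z}_p$ the $p$-adic integers, and $\mathbb{Q}_p$ carries the $p$-adic topology. A quadratic form is a homogeneous polynomial of degree two, not all coefficients zero. For a subset $A$ of a field, $R(A)=\{a/b: a,b\in A,\ b\neq 0\}$. For $S\subseteq\mathbb{Q}_p^n$, $Q(S)=\{Q(\mathbf{x}):\mathbf{x}\in S\}$. *)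

From HB Require Import structures.
From mathcomp Require Import all_boot all_order all_algebra.
From mathcomp Require Import mpoly.
Set Implicit Arguments. Unset Strict Implicit. Unset Printing Implicit Defensive.
Import Order.TTheory GRing.Theory Num.Theory.
Local Open Scope ring_scope.

(* The field Q_p is introduced through its defining (universal) description:
   a field K with a discrete valuation v : K -> int (the value at 0 is
   irrelevant and never used) such that
   - v is multiplicative and satisfies the ultrametric inequality,
   - v (p) = 1 (so v restricted to Q is the p-adic valuation v_p),
   - K is complete for the v-adic metric,
   - Q is dense in K.
   Such a valued field is the completion of (Q, v_p), i.e. it is Q_p
   (unique up to unique isometric isomorphism).  *)

(* "x and y are close at level k" : |x - y|_p <= p^-k, i.e. v(x-y) >= k. *)
Definition vclose (K : fieldType) (v : K -> int) (k : int) (x y : K) : Prop :=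
  x = y \/ k <= v (x - y).

Definition is_padic_field (p : nat) (K : fieldType) (v : K -> int) : Prop :=
  [/\ (forall x y : K, x != 0 -> y != 0 -> v (x * y) = v x + v y),
      (forall x y : K, x != 0 -> y != 0 -> x + y != 0 ->
          Num.min (v x) (v y) <= v (x + y)),
      (p%:R : K) != 0 /\ v p%:R = 1,
      (forall u : nat -> K,
          (forall k : int, exists N : nat, forall m n : nat,
              (N <= m)%N -> (N <= n)%N -> vclose v k (u m) (u n)) ->
          exists l : K, forall k : int, exists N : nat, forall n : nat,
              (N <= n)%N -> vclose v k (u n) l) &
      (forall (x : K) (k : int), exists q : rat, vclose v k x (ratr q))].

Definition in_Zp (K : fieldType) (v : K -> int) (x : K) : Prop :=
  x = 0 \/ 0 <= v x.

Definition vdense (K : fieldType) (v : K -> int) (A : K -> Prop) : Prop :=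
  forall (x : K) (k : int), exists a : K, A a /\ vclose v k a x.

Definition ratio_set (K : fieldType) (A : K -> Prop) : K -> Prop :=
  fun z => exists a b : K, [/\ A a, A b, b != 0 & z = a / b].

Definition qvalues_N (K : fieldType) (n : nat) (Q : {mpoly K[n]}) : K -> Prop :=
  fun z => exists x : 'I_n -> nat, z = Q.@[fun i => (x i)%:R].

Definition qvalues_Z (K : fieldType) (n : nat) (Q : {mpoly K[n]}) : K -> Prop :=
  fun z => exists x : 'I_n -> int, z = Q.@[fun i => (x i)%:~R].

Definition qvalues_Zp (K : fieldType) (v : K -> int) (n : nat)
  (Q : {mpoly K[n]}) : K -> Prop :=
  fun z => exists x : 'I_n -> K, (forall i, in_Zp v (x i)) /\ z = Q.@[x].

Definition quadratic_form (K : fieldType) (n : nat) (Q : {mpoly K[n]}) : Prop :=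
  Q != 0 /\ Q \is 2.-homog.

From HB Require Import structures.
From mathcomp Require Import all_boot all_order all_algebra.
From mathcomp Require Import mpoly.
From mathcomp Require Import zify ring.
Set Implicit Arguments. Unset Strict Implicit. Unset Printing Implicit Defensive.
Import Order.TTheory GRing.Theory Num.Theory.
Local Open Scope ring_scope.

(* Since N ⊆ Z ⊆ Z_p, the implications (i) -> (ii) -> (iii) are immediate.
   For (iii) -> (i): N is dense in Z_p (a p-adic integer is close to a
   rational number, whose denominator is then prime to p, hence by Bezout to
   an integer, hence to its residue modulo a power of p); a polynomial is
   continuous on Z_p^n and division is continuous away from 0, so every
   ratio Q(x)/Q(y) with x, y in Z_p^n is a limit of ratios Q(a)/Q(b) with
   a, b in N^n. *)

Section PadicField.
Variables (K : fieldType) (v : K -> int).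
Hypothesis vM : forall x y : K, x != 0 -> y != 0 -> v (x * y) = v x + v y.
Hypothesis v_ultra : forall x y : K, x != 0 -> y != 0 -> x + y != 0 ->
  Num.min (v x) (v y) <= v (x + y).

(* z lies in p^j Z_p; the value of v at 0 is junk, hence the case z = 0. *)
Definition vgeq (j : int) (z : K) : Prop := z = 0 \/ j <= v z.

Lemma v1 : v 1 = 0.
Proof.
have := vM (oner_neq0 K) (oner_neq0 K).
by rewrite mulr1 -{1}(addr0 (v 1)) => /addrI.
Qed.

Lemma vN (x : K) : x != 0 -> v (- x) = v x.
Proof.
move=> x0; have N10 : (-1 : K) != 0 by rewrite oppr_eq0 oner_neq0.
have vN1 : v (-1) = 0 by have := vM N10 N10; rewrite mulrNN mulr1 v1; lia.
by rewrite -mulN1r vM // vN1 add0r.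
Qed.

Lemma vV (x : K) : x != 0 -> v x^-1 = - v x.
Proof.
by move=> x0; have := vM x0 (invr_neq0 x0); rewrite mulfV // v1; lia.
Qed.

Lemma vgeq0 (j : int) : vgeq j 0. Proof. by left. Qed.

Lemma vgeqW (j j' : int) (z : K) : j' <= j -> vgeq j z -> vgeq j' z.
Proof. by move=> le_j [->|h]; [left|right; apply: le_trans h]. Qed.

Lemma vgeq_exists (z : K) : exists j, vgeq j z.
Proof. by have [->|z0] := eqVneq z 0; [exists 0; left|exists (v z); right]. Qed.

Lemma vgeqN (j : int) (z : K) : vgeq j z -> vgeq j (- z).
Proof.
have [->|z0] := eqVneq z 0; first by rewrite oppr0.
by case=> [/eqP|h]; [rewrite (negbTE z0)|right; rewrite vN].
Qed.

Lemma vgeqD (j : int) (z w : K) : vgeq j z -> vgeq j w -> vgeq j (z + w).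
Proof.
have [->|z0] := eqVneq z 0; first by rewrite add0r.
have [->|w0] := eqVneq w 0; first by rewrite addr0.
have [->|zw0] := eqVneq (z + w) 0; first by left.
case=> [/eqP|hz]; first by rewrite (negbTE z0).
case=> [/eqP|hw]; first by rewrite (negbTE w0).
by right; apply: le_trans (v_ultra z0 w0 zw0); rewrite le_min hz hw.
Qed.

Lemma vgeqB (j : int) (z w : K) : vgeq j z -> vgeq j w -> vgeq j (z - w).
Proof. by move=> hz /vgeqN; apply: vgeqD. Qed.

Lemma vgeqM (j l : int) (z w : K) :
  vgeq j z -> vgeq l w -> vgeq (j + l) (z * w).
Proof.
case=> [->|hz]; first by rewrite mul0r; left.
case=> [->|hw]; first by rewrite mulr0; left.
have [->|z0] := eqVneq z 0; first by rewrite mul0r; left.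
have [->|w0] := eqVneq w 0; first by rewrite mulr0; left.
by right; rewrite vM // lerD.
Qed.

Lemma vgeqV (z : K) : z != 0 -> vgeq (- v z) z^-1.
Proof. by move=> z0; right; rewrite vV. Qed.

Lemma vgeq_nat (m : nat) : vgeq 0 m%:R.
Proof.
elim: m => [|m IH]; first exact: vgeq0.
by rewrite mulrSr; apply: vgeqD IH _; right; rewrite v1.
Qed.

Lemma vgeq_int (z : int) : vgeq 0 z%:~R.
Proof.
by case: z => m; [|rewrite NegzE mulrNz; apply: vgeqN]; apply: vgeq_nat.
Qed.

Lemma vcloseE (k : int) (x y : K) : vclose v k x y <-> vgeq k (x - y).
Proof.
split; case=> [|h]; try by right.
- by move=> ->; rewrite subrr; left.
- by move/eqP; rewrite subr_eq0 => /eqP; left.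
Qed.

Lemma vclose_trans (k : int) (x y z : K) :
  vclose v k x y -> vclose v k y z -> vclose v k x z.
Proof.
move=> /vcloseE hxy /vcloseE hyz; apply/vcloseE.
by rewrite -(subrK y x) -addrA; apply: vgeqD.
Qed.

Lemma v_add_small (z d : K) (j : int) : z != 0 -> vgeq j d -> v z < j ->
  z + d != 0 /\ v (z + d) = v z.
Proof.
move=> z0 hd lt_zj; have [->|d0] := eqVneq d 0; first by rewrite addr0.
have le_jd : j <= v d by case: hd => // /eqP; rewrite (negbTE d0).
have zd0 : z + d != 0.
  apply: contraTneq le_jd => /eqP; rewrite addr_eq0 => /eqP ez.
  by rewrite -[d]opprK -ez vN // -ltNge.
have Nd0 : - d != 0 by rewrite oppr_eq0.
split=> //; have := v_ultra z0 d0 zd0.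
by have := v_ultra zd0 Nd0; rewrite addrK vN // => /(_ z0); lia.
Qed.

Lemma div_cont (a b : K) (k : int) : b != 0 -> exists L, forall a' b',
  vgeq L (a' - a) -> vgeq L (b' - b) -> b' != 0 /\ vgeq k (a' / b' - a / b).
Proof.
move=> b0; have [ja ha] := vgeq_exists a.
have hb : vgeq (v b) b by right.
(* L > v b forces v b' = v b; the rest absorbs the valuations of a, b, b'. *)
pose L := `|k|%:Z + `|ja|%:Z + 3 * `|v b|%:Z + 1.
exists L => a' b' ha' hb'.
have [b'0 vb'] : b' != 0 /\ v b' = v b.
  by rewrite -(subrK b b') addrC; apply: v_add_small hb' _; rewrite /L; lia.
split=> //.
have -> : a' / b' - a / b = ((a' - a) * b - a * (b' - b)) * b^-1 * b'^-1.
  by field; rewrite b0 b'0.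
apply: (@vgeqW (L - `|ja|%:Z - `|v b|%:Z + - v b + - v b')).
  by rewrite /L vb'; lia.
apply: vgeqM (vgeqV b'0); apply: vgeqM (vgeqV b0).
apply: vgeqB.
- by apply: vgeqW (vgeqM ha' hb); lia.
- by apply: vgeqW (vgeqM ha hb'); lia.
Qed.

Definition vadherent (A : K -> Prop) (z : K) : Prop :=
  forall k : int, exists a : K, A a /\ vclose v k a z.

Lemma vdense_ratio_adherent (A B : K -> Prop) :
  (forall b, B b -> vadherent A b) ->
  vdense v (ratio_set B) -> vdense v (ratio_set A).
Proof.
move=> adhBA denseB z k.
have [_ [[a [b [Ba Bb b0 ->]]] close_ab]] := denseB z k.
have [L contL] := div_cont a k b0.
have [a' [Aa' /vcloseE close_a]] := adhBA a Ba L.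
have [b' [Ab' /vcloseE close_b]] := adhBA b Bb L.
have [b'0 close_ratio] := contL a' b' close_a close_b.
exists (a' / b'); split; first by exists a', b'.
by apply: vclose_trans close_ab; apply/vcloseE.
Qed.

Definition zp_near (k : int) (a b : K) : Prop :=
  [/\ vgeq 0 a, vgeq 0 b & vgeq k (a - b)].

Lemma zp_near1 (k : int) : zp_near k 1 1.
Proof. by split; [exact: vgeq_nat 1|exact: vgeq_nat 1|rewrite subrr; left]. Qed.

Lemma zp_nearM (k : int) (a a' b b' : K) :
  zp_near k a a' -> zp_near k b b' -> zp_near k (a * b) (a' * b').
Proof.
move=> [a0 a'0 daa'] [b0 b'0 dbb']; split.
- exact: vgeqM a0 b0.
- exact: vgeqM a'0 b'0.
have -> : a * b - a' * b' = a * (b - b') + (a - a') * b' by ring.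
apply: vgeqD; first by rewrite -[k]add0r; apply: vgeqM.
by rewrite -[k]addr0; apply: vgeqM.
Qed.

Lemma zp_near_monomial (n : nat) (k : int) (x y : 'I_n -> K) (m : 'X_{1..n}) :
  (forall i, zp_near k (x i) (y i)) ->
  zp_near k (\prod_i x i ^+ m i) (\prod_i y i ^+ m i).
Proof.
move=> near_xy; apply: (big_ind2 (zp_near k)) => [|????|i _].
- exact: zp_near1.
- exact: zp_nearM.
- elim: (m i) => [|e IH]; first by rewrite expr0; exact: zp_near1.
  by rewrite !exprS; exact: zp_nearM.
Qed.

Lemma vgeq_seq_bound (T : eqType) (s : seq T) (f : T -> K) :
  exists c : int, forall t, t \in s -> vgeq c (f t).
Proof.
elim: s => [|t s [c hc]]; first by exists 0.
have [c0 hc0] := vgeq_exists (f t).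
exists (Num.min c0 c) => u; rewrite inE => /predU1P [->|us].
- by apply: vgeqW hc0; rewrite ge_min lexx.
- by apply: vgeqW (hc u us); rewrite ge_min lexx orbT.
Qed.

Lemma meval_cont (n : nat) (P : {mpoly K[n]}) (k : int) : exists L : int,
  forall x y : 'I_n -> K, (forall i, zp_near L (x i) (y i)) ->
  vgeq k (P.@[x] - P.@[y]).
Proof.
have [c hc] := vgeq_seq_bound (msupp P) (fun m => P@_m).
exists (k - c) => x y near_xy; rewrite !mevalE -sumrB big_seq.
apply: (big_ind (vgeq k)) => [|??|m mP]; [exact: vgeq0|exact: vgeqD|].
rewrite -mulrBr -[k](subrKC c); apply: vgeqM (hc m mP) _.
by have [] := zp_near_monomial m near_xy.
Qed.

Variable p : nat.
Hypothesis p_prime : prime p.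
Hypothesis p_neq0 : (p%:R : K) != 0.
Hypothesis vp : v p%:R = 1.
Hypothesis rat_dense :
  forall (x : K) (k : int), exists q : rat, vclose v k x (ratr q).

Lemma v_expp (e : nat) : (p%:R : K) ^+ e != 0 /\ v (p%:R ^+ e) = e%:Z.
Proof.
elim: e => [|e [pe0 vpe]]; first by rewrite expr0 v1 oner_neq0.
by rewrite exprS mulf_neq0 // vM // vp vpe; split => //; lia.
Qed.

Lemma vgeq1_int_dvd (z : int) : vgeq 1 z%:~R -> (p %| `|z|)%N.
Proof.
move=> hz; apply/negPn/negP => p_ndvd_z.
have /eqP gcd1 : coprimez p z by rewrite coprimezE /= prime_coprime.
have [u [w bezout]] := Bezoutz p z; rewrite gcd1 in bezout.
have : vgeq (0 + 1) (u%:~R * p%:R + w%:~R * z%:~R).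
  by apply: vgeqD; apply: vgeqM (vgeq_int _) _ => //; right; rewrite vp.
rewrite -[p%:R]/((p : int)%:~R) -!intrM -intrD bezout add0r.
by case=> [/eqP|]; rewrite ?oner_eq0 // v1.
Qed.

Lemma v_int_coprime (z : int) :
  ~~ (p %| `|z|)%N -> z%:~R != 0 :> K /\ v z%:~R = 0.
Proof.
move=> p_ndvd_z.
have not_vgeq1 : ~ vgeq 1 z%:~R by move/vgeq1_int_dvd; apply/negP.
have [z0|vz] := vgeq_int z; first by case: not_vgeq1; left.
have z0 : z%:~R != 0 :> K by apply: contra_not_neq not_vgeq1 => ->; left.
have : ~ 1 <= v z%:~R by move=> h; apply: not_vgeq1; right.
by split=> //; lia.
Qed.

Lemma v_natr (d : nat) :
  (0 < d)%N -> d%:R != 0 :> K /\ v d%:R = (logn p d)%:Z.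
Proof.
move=> d_gt0; set e := logn p d.
have [d' cop_pd' ed] := pfactor_coprime p_prime d_gt0; rewrite -/e in ed.
have [d'0 vd'] : d'%:R != 0 :> K /\ v d'%:R = 0.
  by apply: (v_int_coprime (z := d')); rewrite -prime_coprime.
have [pe0 vpe] := v_expp e.
by rewrite ed natrM natrX mulf_neq0 // vM // vd' vpe add0r.
Qed.

Lemma rat_approx_int (q : rat) (k : nat) :
  vgeq 0 (ratr q) -> exists m : int, vgeq k (ratr q - m%:~R).
Proof.
move=> q_int; set a := numq q; set d := `|denq q|%N.
have ed : denq q = d%:Z by rewrite /d gtz0_abs.
have d_gt0 : (0 < d)%N by rewrite /d absz_gt0 denq_neq0.
have eq : ratr q = a%:~R / d%:R :> K by rewrite /ratr ed.
have p_ndvd_d : ~~ (p %| d)%N.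
  apply/negP => p_dvd_d.
  have : coprime p `|a|.
    by rewrite coprime_sym (coprime_dvdr p_dvd_d) // coprime_num_den.
  rewrite prime_coprime // => /v_int_coprime [a0 va].
  have [d0 vd] := v_natr d_gt0.
  have e_gt0 : (0 < logn p d)%N by rewrite logn_gt0 mem_primes p_prime d_gt0.
  case: q_int; rewrite eq; first by apply/eqP; rewrite mulf_neq0 ?invr_eq0.
  by rewrite vM ?invr_eq0 // vV // va vd; lia.
have [d0 vd] : d%:R != 0 :> K /\ v d%:R = 0.
  by apply: (v_int_coprime (z := d)).
have /eqP gcd1 : coprimez d (p ^ k)%N.
  by rewrite coprimezE /= coprime_sym coprimeXl // prime_coprime.
have [u [w bezout]] := Bezoutz d (p ^ k)%N; rewrite gcd1 in bezout.
have ewp : w%:~R * p%:R ^+ k = 1 - u%:~R * d%:R :> K.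
  apply: (addrI (u%:~R * d%:R)); rewrite addrCA subrr addr0.
  rewrite -natrX -[(p ^ k)%N%:R]/((p ^ k)%N%:Z%:~R) -[d%:R]/(d%:Z%:~R).
  by rewrite -!intrM -intrD bezout.
exists (a * u); rewrite eq.
have -> : a%:~R / d%:R - (a * u)%:~R = a%:~R * w%:~R * (p%:R ^+ k) / d%:R :> K.
  by rewrite -(mulrA a%:~R) ewp intrM; field.
apply: (@vgeqW (0 + 0 + k%:Z + - v d%:R)); first by rewrite vd; lia.
apply: vgeqM (vgeqV d0); apply: vgeqM (vgeqM (vgeq_int a) (vgeq_int w)) _.
by right; rewrite (v_expp k).2.
Qed.

Lemma int_approx_nat (m : int) (k : nat) :
  exists r : nat, vgeq k (m%:~R - r%:R).
Proof.
have pk0 : (p ^ k)%N%:Z != 0.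
  by rewrite eqz_nat expn_eq0 negb_and -lt0n prime_gt0.
exists `|(m %% (p ^ k)%N)%Z|%N.
rewrite pmulrn gez0_abs ?modz_ge0 //.
rewrite {1}(divz_eq m (p ^ k)%N) intrD addrK intrM -[k%:Z]add0r.
apply: vgeqM (vgeq_int _) _.
by rewrite -pmulrn natrX; right; rewrite (v_expp k).2.
Qed.

Lemma Zp_approx_nat (x : K) (k : int) :
  vgeq 0 x -> exists r : nat, vgeq k (x - r%:R).
Proof.
move=> x_int; have [q /vcloseE close_q] := rat_dense x `|k|%N.
have q_int : vgeq 0 (ratr q).
  by rewrite -(subKr x (ratr q)); apply: vgeqB x_int (vgeqW _ close_q).
have [m close_m] := rat_approx_int `|k|%N q_int.
have [r close_r] := int_approx_nat m `|k|%N.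
exists r; apply: (vgeqW (lez_abs k)).
have -> : x - r%:R = (x - ratr q) + ((ratr q - m%:~R) + (m%:~R - r%:R)).
  by rewrite !addrA !subrK.
by apply: vgeqD close_q (vgeqD _ _).
Qed.

Lemma qvalues_Zp_adherent_N (n : nat) (Q : {mpoly K[n]}) (z : K) :
  qvalues_Zp v Q z -> vadherent (qvalues_N Q) z.
Proof.
move=> [x [x_int ->]] k; have [L contQ] := meval_cont Q k.
have [m close_m] := fin_all_exists (fun i => Zp_approx_nat L (x_int i)).
exists Q.@[fun i => (m i)%:R]; split; first by exists m.
apply/vcloseE/contQ => i; split; [exact: vgeq_nat|exact: x_int|].
by rewrite -opprB; apply: vgeqN.
Qed.

End PadicField.

Theorem lemma1 (p : nat) (K : fieldType) (v : K -> int)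
  (hp : prime p) (hK : is_padic_field p v)
  (n : nat) (Q : {mpoly K[n]}) (hQ : quadratic_form Q) :
  [<-> vdense v (ratio_set (qvalues_N Q));
       vdense v (ratio_set (qvalues_Z Q));
       vdense v (ratio_set (qvalues_Zp v Q))].
Proof.
have [vM v_ultra [p_neq0 vp] _ rat_dense] := hK.
have adherent_sub (A B : K -> Prop) :
    (forall z, B z -> A z) -> forall z, B z -> vadherent v A z.
  by move=> BA z Bz k; exists z; split; [exact: BA|left].
split; [|split]; apply: (vdense_ratio_adherent vM v_ultra).
- by apply: adherent_sub => _ [x ->]; exists (fun i => Posz (x i)).
- apply: adherent_sub => _ [x ->]; exists (fun i => (x i)%:~R).
  by split=> // i; exact: vgeq_int.
- exact: (qvalues_Zp_adherent_N vM v_ultra hp p_neq0 vp rat_dense).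
Qed.
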